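(* Let $k\in\mathbb{N}$. For every finite set $A\subseteq\mathbb{N}$ with $\min(A)=0$ and $\max(A)\le k$ and $A\neq\{0,1,\ldots,k\}$, we have $d(A)<d(\{0,1,\ldots,k\})$. That is, $\{0,1,\ldots,k\}$ is the unique maximum of $d(\cdot)$ on the collection of sets $A\subseteq\mathbb{N}$ with $\min(A)=0$ and $\max(A)\le k$.
   Context: $\mathbb{N}=\{0,1,2,\ldots\}$. For $A,B\subseteq\mathbb{N}$ the sumset is $A+B=\{a+b: a\in A, b\in B\}$. For a nonempty finite set $C\subseteq\mathbb{N}$, a set $B\subseteq\mathbb{N}$ is an (additive) divisor of $C$ if there exists $D\subseteq\mathbb{N}$ with $B+D=C$; $d(C)$ denotes the number of distinct divisors of $C$. *)

From mathcomp Require Import all_boot finmap.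
From mathcomp Require Import boolp classical_sets cardinality.

Set Implicit Arguments.
Unset Strict Implicit.
Unset Printing Implicit Defensive.

Local Open Scope classical_set_scope.
Local Open Scope fset_scope.

Definition sumset (A B : set nat) : set nat :=
  [set (a + b)%N | a in A & b in B].

Definition fsetS (C : {fset nat}) : set nat := [set x | x \in C].

(* B is an additive divisor of C : there is D ⊆ ℕ (arbitrary) with B + D = C.
   Divisors of a nonempty finite C are automatically finite, so B ranges
   over finite sets of naturals. *)
Definition is_divisor (B : {fset nat}) (C : {fset nat}) : Prop :=
  exists D : set nat, sumset (fsetS B) D = fsetS C.

(* d(C) = number of distinct divisors of C (the set of divisors is finite,
   so fset_set enumerates it exactly). *)
Definition d (C : {fset nat}) : nat :=
  #|` fset_set [set B : {fset nat} | is_divisor B C] |.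

Definition interval0 (k : nat) : {fset nat} := [fset i | i in iota 0 k.+1].

From mathcomp Require Import all_boot finmap.
From mathcomp Require Import boolp classical_sets cardinality.
From mathcomp Require Import zify.

(* Every divisor B of A (with 0 in A) is a subset of A containing 0.  Send B
   to [saturate A B], i.e. B together with every non-element of A below
   max B: its gaps are no wider than those of A, and its maximum is still
   max B, so adding [0, k - max B] recovers [0, k].  The map is injective,
   since [A `&` saturate A B = B], and it misses the divisor [0, h] of [0, k]
   for any h <= k outside A. *)

Set Implicit Arguments.
Unset Strict Implicit.
Unset Printing Implicit Defensive.

Local Open Scope fset_scope.

Lemma mem_interval0 k x : (x \in interval0 k) = (x <= k).
Proof. by rewrite /interval0 !inE /= mem_iota; case: x => //= x; lia. Qed.

Lemma is_divisor_interval0 k j (C : {fset nat}) :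
  j <= k -> j \in C -> (forall z, z \in C -> z <= j) ->
  (forall y, y < j -> exists2 z, z \in C & z <= y <= z + (k - j)) ->
  is_divisor C (interval0 k).
Proof.
move=> jk jC Cj gaps; exists [set x | x <= k - j]%classic.
apply/seteqP; split=> [y [z zC [x xkj <-]] | y].
  by rewrite /fsetS /= mem_interval0; have := Cj _ zC; move: xkj => /=; lia.
rewrite /fsetS /= mem_interval0 => yk.
have [z zC /andP[zy yz]] : exists2 z, z \in C & z <= y <= z + (k - j).
  have [/gaps // | jy] := ltnP y j.
  by exists j => //; apply/andP; split; lia.
by exists z => //; exists (y - z) => /=; lia.
Qed.

Lemma is_divisor_interval0_le h k :
  h <= k -> is_divisor (interval0 h) (interval0 k).
Proof.
move=> hk; apply: (@is_divisor_interval0 k h) => [//|||y yh].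
- by rewrite mem_interval0.
- by move=> z; rewrite mem_interval0.
by exists y; rewrite ?mem_interval0 ?leqnn ?leq_addr ?(ltnW yh).
Qed.

Section DivisorsOfSetWithZero.

Variable C : {fset nat}.
Hypothesis C0 : 0 \in C.

Lemma divisor_has0 (B : {fset nat}) (D : set nat) :
  sumset (fsetS B) D = fsetS C -> 0 \in B /\ D 0.
Proof.
move=> BDC; have : fsetS C 0 by [].
rewrite -BDC => -[b bB [x Dx /eqP]]; rewrite addn_eq0 => /andP[/eqP b0 /eqP x0].
by split; [rewrite -b0 | rewrite -x0].
Qed.

Lemma divisor_subset (B : {fset nat}) : is_divisor B C -> B `<=` C.
Proof.
move=> [D BDC]; have [_ D0] := divisor_has0 BDC.
apply/fsubsetP => b bB; have : fsetS C (b + 0)%N by rewrite -BDC; exists b => //; exists 0.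
by rewrite addn0.
Qed.

Lemma finite_divisors : finite_set [set B : {fset nat} | is_divisor B C]%classic.
Proof.
apply: sub_finite_set (finite_fset (fpowerset C)) => B divB.
by rewrite /= fpowersetE; apply: divisor_subset.
Qed.

Definition divisors : {fset {fset nat}} :=
  fset_set [set B : {fset nat} | is_divisor B C]%classic.

Lemma divisorsP (B : {fset nat}) : reflect (is_divisor B C) (B \in divisors).
Proof. by rewrite in_fset_set ?inE; [apply: asboolP | apply: finite_divisors]. Qed.

End DivisorsOfSetWithZero.

Definition fmax (B : {fset nat}) : nat := \max_(b <- B) b.

Lemma le_fmax (B : {fset nat}) x : x \in B -> x <= fmax B.
Proof. by move=> xB; rewrite /fmax leq_bigmax_seq. Qed.

Lemma fmax_mem (B : {fset nat}) x : x \in B -> fmax B \in B.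
Proof.
move=> xB; have : (fmax B \in B) || (fmax B == 0).
  rewrite /fmax big_seq.
  apply: (big_ind (fun m => (m \in B) || (m == 0))) => [|m n Km Kn|b -> //].
    by rewrite orbT.
  by rewrite /maxn; case: (m < n).
case/orP => [// | /eqP max0]; have := le_fmax xB.
by rewrite max0 leqn0 => /eqP x0; rewrite -x0.
Qed.

Definition saturate (A B : {fset nat}) : {fset nat} :=
  B `|` (interval0 (fmax B) `\` A).

Lemma mem_saturate A B x :
  (x \in saturate A B) = (x \in B) || (x <= fmax B) && (x \notin A).
Proof. by rewrite inE in_fsetD mem_interval0 andbC. Qed.

Lemma fsetI_saturate A B : B `<=` A -> A `&` saturate A B = B.
Proof.
move=> /fsubsetP BA; apply/fsetP => x; rewrite inE mem_saturate.
by have [/BA -> | _] := boolP (x \in B); case: (x \in A); rewrite ?andbF.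
Qed.

Lemma saturate_neq_interval0 A B h x :
  B `<=` A -> x \in B -> h \notin A -> saturate A B != interval0 h.
Proof.
move=> /fsubsetP BA xB hA; apply/eqP => satE.
have maxB := fmax_mem xB.
have : fmax B \in saturate A B by rewrite mem_saturate maxB.
rewrite satE mem_interval0 => maxh.
have : h \in saturate A B by rewrite satE mem_interval0.
rewrite mem_saturate => /orP[/BA hA' | /andP[hmax _]].
  by rewrite hA' in hA.
have hE : h = fmax B by apply/eqP; rewrite eqn_leq hmax maxh.
by rewrite hE (BA _ maxB) in hA.
Qed.

Lemma saturate_is_divisor k A B :
  0 \in A -> (forall a, a \in A -> a <= k) ->
  is_divisor B A -> is_divisor (saturate A B) (interval0 k).
Proof.
move=> A0 Ak divB; have /fsubsetP BA := divisor_subset A0 divB.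
have [D BDA] := divB; have [B0 _] := divisor_has0 A0 BDA.
have maxB := fmax_mem B0.
apply: (@is_divisor_interval0 k (fmax B)).
- exact/Ak/BA.
- by rewrite mem_saturate maxB.
- by move=> z; rewrite mem_saturate => /orP[/le_fmax | /andP[]].
move=> y ymax; have [yA | yA] := boolP (y \in A); last first.
  by exists y; rewrite ?mem_saturate ?yA ?(ltnW ymax) ?orbT ?leqnn ?leq_addr.
have : fsetS A y by [].
rewrite -BDA => -[b bB [x Dx bxy]].
have /Ak maxxk : fsetS A (fmax B + x)%N by rewrite -BDA; exists (fmax B) => //; exists x.
by exists b; rewrite ?mem_saturate ?bB //; apply/andP; split; lia.
Qed.

Lemma saturate_divisors_proper k A h :
  0 \in A -> (forall a, a \in A -> a <= k) -> h <= k -> h \notin A ->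
  saturate A @` divisors A `<` divisors (interval0 k).
Proof.
move=> A0 Ak hk hA; have I0 : 0 \in interval0 k by rewrite mem_interval0.
rewrite fproperEneq; apply/andP; split.
  apply/negP => /eqP satE.
  have : interval0 h \in divisors (interval0 k).
    exact/(divisorsP I0)/is_divisor_interval0_le.
  rewrite -satE => /imfsetP[B /(divisorsP A0) divB /esym /eqP].
  have [D /(divisor_has0 A0)[B0 _]] := divB.
  exact/negP/(saturate_neq_interval0 (divisor_subset A0 divB) B0 hA).
apply/fsubsetP => _ /imfsetP[B /(divisorsP A0) divB ->].
exact/(divisorsP I0)/saturate_is_divisor.
Qed.

Theorem mainTheorem1 (k : nat) (A : {fset nat}) :
  0 \in A ->
  (forall a, a \in A -> a <= k) ->
  A != interval0 k ->
  d A < d (interval0 k).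
Proof.
move=> A0 Ak neqA.
have [h hk hA] : exists2 h, h \in interval0 k & h \notin A.
  apply/fsubsetPn; apply: contra neqA => kA; rewrite eqEfsubset kA andbT.
  by apply/fsubsetP => a /Ak; rewrite mem_interval0.
rewrite mem_interval0 in hk.
have inj : {in divisors A &, injective (saturate A)}.
  move=> B1 B2 /(divisorsP A0)/(divisor_subset A0) B1A.
  move=> /(divisorsP A0)/(divisor_subset A0) B2A satE.
  by rewrite -(fsetI_saturate B1A) -(fsetI_saturate B2A) satE.
have /card_in_imfsetP/eqP cardE := inj.
rewrite -[d A]/#|` divisors A| -cardE.
exact/fproper_ltn_card/(saturate_divisors_proper A0 Ak hk hA).
Qed.
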